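(* Let $y$ be an optimal (minimum-cost feasible) solution, $S$ an active set for $y$, and $i\in S$. If $y_i<x_i$, then any two distinct $j,j'\in\widetilde\gamma(i)$ with $y_j>x_i$ and $y_{j'}>x_i$ do not overlap, i.e. $|y_j-y_{j'}|\ge r_j+r_{j'}$. Symmetrically, if $y_i>x_i$, then any two distinct $j,j'\in\widetilde\gamma(i)$ with $y_j<x_i$ and $y_{j'}<x_i$ satisfy $|y_j-y_{j'}|\ge r_j+r_{j'}$.
   Context: Barrier coverage problem: sensors $i=1,\dots,n$ with locations $x_i\in\mathbb{R}$ and radii $r_i>0$, indexed so that $x_1\le\cdots\le x_n$; a solution $y\in\mathbb{R}^n$ places sensor $i$ to cover $[y_i-r_i,y_i+r_i]$; it is feasible if these intervals cover $[0,L]$; its cost is $\sum_i|y_i-x_i|$; an optimal solution is a feasible solution of minimum cost. A set $S$ is active for $y$ if $\bigcup_{i\in S}[y_i-r_i,y_i+r_i]\supseteq[0,L]$. For $i\in S$, $\gamma(i)$ is the set of $j\in S$ with ($i<j$ and $y_i>y_j$) or ($i>j$ and $y_i<y_j$); and $\widetilde\gamma(i)=\{j\in\gamma(i): |x_j-y_j|\le|x_i-y_i|\}$. *)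

(* real numbers. Sensors are indexed by 0..n-1 (paper: 1..n). *)
From Stdlib Require Import Reals.
Open Scope R_scope.

Definition sorted_locs (n : nat) (x : nat -> R) : Prop :=
  forall i j : nat, (i <= j)%nat -> (j < n)%nat -> x i <= x j.

Definition covers (n : nat) (r : nat -> R) (L : R) (S : nat -> Prop) (y : nat -> R) : Prop :=
  forall p : R, 0 <= p <= L ->
    exists i : nat, (i < n)%nat /\ S i /\ y i - r i <= p <= y i + r i.

Definition all_sensors (i : nat) : Prop := True.

Definition feasible (n : nat) (r : nat -> R) (L : R) (y : nat -> R) : Prop :=
  covers n r L all_sensors y.

Fixpoint cost (n : nat) (x y : nat -> R) : R :=
  match n with
  | O => 0
  | S m => cost m x y + Rabs (y m - x m)
  end.

Definition optimal (n : nat) (x r : nat -> R) (L : R) (y : nat -> R) : Prop :=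
  feasible n r L y /\
  forall z : nat -> R, feasible n r L z -> cost n x y <= cost n x z.

Definition active (n : nat) (r : nat -> R) (L : R) (S : nat -> Prop) (y : nat -> R) : Prop :=
  covers n r L S y.

Definition gamma (n : nat) (S : nat -> Prop) (y : nat -> R) (i j : nat) : Prop :=
  (j < n)%nat /\ S j /\
  (((i < j)%nat /\ y i > y j) \/ ((j < i)%nat /\ y i < y j)).

Definition gamma_t (n : nat) (x : nat -> R) (S : nat -> Prop) (y : nat -> R) (i j : nat) : Prop :=
  gamma n S y i j /\ Rabs (x j - y j) <= Rabs (x i - y i).

(** If sensor [a]
    sits right of its location and its interval overlaps another interval [b]
    that reaches at least as far right, then moving [a] slightly to the left
    keeps the cover (the vacated right end is covered by [b]) and lowers the
    cost; so two right-displaced sensors never overlap, and by the reflection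
    [p |-> L - p] neither do two left-displaced ones.  If [y_i < x_i], every
    [j] in [gamma(i)] with [y_j > x_i] lies left of [i] in the sorted order
    ([i < j] would force [y_j < y_i < x_i]), so [x_j <= x_i < y_j]: the sensors
    in question are right-displaced. *)

From Stdlib Require Import Reals Lra Lia.
Open Scope R_scope.

Definition relocate (y : nat -> R) (a : nat) (v : R) : nat -> R :=
  fun k => if Nat.eq_dec k a then v else y k.

Lemma cost_relocate_ge (x y : nat -> R) a v m : (m <= a)%nat ->
  cost m x (relocate y a v) = cost m x y.
Proof.
  induction m as [|m IH]; intros Hm; simpl; [reflexivity|].
  rewrite IH by lia. unfold relocate.
  destruct (Nat.eq_dec m a); [lia|reflexivity].
Qed.

Lemma cost_relocate (x y : nat -> R) a v m : (a < m)%nat ->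
  cost m x (relocate y a v) = cost m x y - Rabs (y a - x a) + Rabs (v - x a).
Proof.
  induction m as [|m IH]; intros Ham; [lia|]. simpl.
  unfold relocate at 2.
  destruct (Nat.eq_dec m a) as [->|Hne].
  - rewrite cost_relocate_ge by lia. lra.
  - rewrite IH by lia. lra.
Qed.

Lemma optimal_relocate n x r L y a v :
  optimal n x r L y -> (a < n)%nat -> feasible n r L (relocate y a v) ->
  Rabs (y a - x a) <= Rabs (v - x a).
Proof.
  intros [_ Hmin] Ha Hf.
  specialize (Hmin _ Hf). rewrite cost_relocate in Hmin by exact Ha. lra.
Qed.

Lemma feasible_relocate n r L y a b v :
  feasible n r L y -> (a < n)%nat -> (b < n)%nat -> a <> b ->
  (forall p, y a - r a <= p <= y a + r a ->
     v - r a <= p <= v + r a \/ y b - r b <= p <= y b + r b) ->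
  feasible n r L (relocate y a v).
Proof.
  intros Hf Ha Hb Hab Hmoved p Hp.
  destruct (Hf p Hp) as [k [Hk [_ Hkp]]]. unfold relocate.
  destruct (Nat.eq_dec k a) as [->|Hka].
  - destruct (Hmoved p Hkp) as [Hnew|Hbp].
    + exists a. destruct (Nat.eq_dec a a); [|congruence]. now split.
    + exists b. destruct (Nat.eq_dec b a); [congruence|]. now split.
  - exists k. destruct (Nat.eq_dec k a); [congruence|]. now split.
Qed.

Lemma optimal_right_displaced_overlap n x r L y a b :
  optimal n x r L y -> (a < n)%nat -> (b < n)%nat -> a <> b ->
  x a < y a -> y b - r b < y a + r a <= y b + r b -> False.
Proof.
  intros Hopt Ha Hb Hab Hxa [Hov Hend].
  set (e := Rmin (y a - x a) (y a + r a - (y b - r b))).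
  assert (He : 0 < e) by (apply Rmin_pos; lra).
  assert (He1 : e <= y a - x a) by apply Rmin_l.
  assert (He2 : e <= y a + r a - (y b - r b)) by apply Rmin_r.
  assert (Hcost := optimal_relocate n x r L y a (y a - e) Hopt Ha).
  rewrite (Rabs_right (y a - x a)), (Rabs_right (y a - e - x a)) in Hcost
    by lra.
  enough (Hf : feasible n r L (relocate y a (y a - e)))
    by (specialize (Hcost Hf); lra).
  apply (feasible_relocate n r L y a b); try assumption.
  - apply Hopt.
  - intros p Hp. destruct (Rle_dec p (y a - e + r a)); [left|right]; lra.
Qed.

Lemma optimal_right_displaced_disjoint n x r L y j j' :
  optimal n x r L y -> (j < n)%nat -> (j' < n)%nat -> j <> j' ->
  x j < y j -> x j' < y j' -> Rabs (y j - y j') >= r j + r j'.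
Proof.
  intros Hopt Hj Hj' Hjj' Hxj Hxj'.
  apply Rnot_lt_ge. intros [Hlt Hgt]%Rabs_def2.
  destruct (Rle_dec (y j + r j) (y j' + r j')).
  - apply (optimal_right_displaced_overlap n x r L y j j'); auto; lra.
  - apply (optimal_right_displaced_overlap n x r L y j' j); auto; lra.
Qed.

Definition mirror (L : R) (f : nat -> R) : nat -> R := fun k => L - f k.

Lemma cost_mirror n L x z : cost n (mirror L x) (mirror L z) = cost n x z.
Proof.
  induction n as [|n IH]; simpl; [reflexivity|]. rewrite IH. unfold mirror.
  replace (L - z n - (L - x n)) with (- (z n - x n)) by ring.
  now rewrite Rabs_Ropp.
Qed.

Lemma cost_mirror_l n L x z : cost n (mirror L x) z = cost n x (mirror L z).
Proof.
  induction n as [|n IH]; simpl; [reflexivity|]. rewrite IH. unfold mirror.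
  replace (z n - (L - x n)) with (- (L - z n - x n)) by ring.
  now rewrite Rabs_Ropp.
Qed.

Lemma covers_mirror n r L S y : covers n r L S y -> covers n r L S (mirror L y).
Proof.
  intros Hcov p Hp. destruct (Hcov (L - p)) as [k [Hk [HS Hkp]]]; [lra|].
  exists k. unfold mirror. repeat split; auto; lra.
Qed.

Lemma optimal_mirror n x r L y :
  optimal n x r L y -> optimal n (mirror L x) r L (mirror L y).
Proof.
  intros [Hf Hmin]. split; [now apply covers_mirror|].
  intros z Hz. rewrite cost_mirror, cost_mirror_l.
  now apply Hmin, covers_mirror.
Qed.

Lemma optimal_left_displaced_disjoint n x r L y j j' :
  optimal n x r L y -> (j < n)%nat -> (j' < n)%nat -> j <> j' ->
  y j < x j -> y j' < x j' -> Rabs (y j - y j') >= r j + r j'.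
Proof.
  intros Hopt Hj Hj' Hjj' Hxj Hxj'.
  assert (Hm := optimal_right_displaced_disjoint n (mirror L x) r L (mirror L y)
                  j j' (optimal_mirror n x r L y Hopt) Hj Hj' Hjj').
  unfold mirror in Hm.
  replace (L - y j - (L - y j')) with (- (y j - y j')) in Hm by ring.
  rewrite Rabs_Ropp in Hm. apply Hm; lra.
Qed.

Lemma gamma_right_displaced n x S y i j :
  sorted_locs n x -> (i < n)%nat -> y i < x i ->
  gamma n S y i j -> x i < y j -> x j < y j.
Proof.
  intros Hsorted Hi Hyi [_ [_ [[_ Hyij]|[Hji _]]]] Hyj; [lra|].
  assert (x j <= x i) by (apply Hsorted; lia). lra.
Qed.

Lemma gamma_left_displaced n x S y i j :
  sorted_locs n x -> x i < y i ->
  gamma n S y i j -> y j < x i -> y j < x j.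
Proof.
  intros Hsorted Hyi [Hj [_ [[Hij _]|[_ Hyij]]]] Hyj; [|lra].
  assert (x i <= x j) by (apply Hsorted; lia). lra.
Qed.

Theorem mainTheorem6 (n : nat) (x r : nat -> R) (L : R) (y : nat -> R)
  (S : nat -> Prop) (i : nat)
  (Hsorted : sorted_locs n x)
  (Hr : forall k : nat, (k < n)%nat -> 0 < r k)
  (Hopt : optimal n x r L y)
  (Hact : active n r L S y)
  (Hi : (i < n)%nat) (HiS : S i) :
  (y i < x i ->
     forall j j' : nat, j <> j' ->
       gamma_t n x S y i j -> gamma_t n x S y i j' ->
       y j > x i -> y j' > x i ->
       Rabs (y j - y j') >= r j + r j')
  /\
  (y i > x i ->
     forall j j' : nat, j <> j' ->
       gamma_t n x S y i j -> gamma_t n x S y i j' ->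
       y j < x i -> y j' < x i ->
       Rabs (y j - y j') >= r j + r j').
Proof.
  split; intros Hyi j j' Hjj' [Hg _] [Hg' _] Hyj Hyj'.
  - apply (optimal_right_displaced_disjoint n x r L y j j' Hopt
             (proj1 Hg) (proj1 Hg') Hjj');
      eapply gamma_right_displaced; eauto.
  - apply (optimal_left_displaced_disjoint n x r L y j j' Hopt
             (proj1 Hg) (proj1 Hg') Hjj');
      eapply gamma_left_displaced; eauto.
Qed.
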